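(* Let $\ell \geq 1$ be an integer and let $H_\ell$ be the graph defined in the context. Then every path in $H_\ell$ has length (number of edges) at most $2\ell^2+4\ell+7$.
   Context: For an integer $\ell\ge 1$, $H_\ell$ is the graph with vertex set $V_\ell=\{v_{h,j} : h\in\{-\ell,\dots,\ell\},\ j\in\{1,\dots,2^{\ell-|h|}\}\}$ and with the following edges: (1) $v_{h,j}v_{h-1,2j-1}$ and $v_{h,j}v_{h-1,2j}$ for every $h\in\{1,\dots,\ell\}$ and $j\in\{1,\dots,2^{\ell-h}\}$; (2) $v_{h,j}v_{h+1,2j-1}$ and $v_{h,j}v_{h+1,2j}$ for every $h\in\{-\ell,\dots,-1\}$ and $j\in\{1,\dots,2^{\ell-|h|}\}$; (3) the edge $v_{\ell,1}v_{-\ell,1}$; (4) the edges $v_{0,2j-1}v_{0,2j}$ for every $j\in\{1,\dots,2^{\ell-1}\}$. Thus $H_\ell$ consists of two complete binary trees of height $\ell$ (rooted at $v_{\ell,1}$ and $v_{-\ell,1}$) whose leaves $v_{0,j}$ are identified, plus an edge between the roots and a perfect matching on consecutive leaves. *)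

From mathcomp Require Import all_boot all_algebra.
Import GRing.Theory Num.Theory.

Set Implicit Arguments.
Unset Strict Implicit.
Unset Printing Implicit Defensive.

Local Open Scope ring_scope.

(* A vertex v_{h,j} of H_l is encoded as the pair (h, j) : int * nat. *)
Definition vertex := (int * nat)%type.

Definition isV (l : nat) (v : vertex) : bool :=
  (- (l%:Z) <= v.1 <= l%:Z) && (1 <= v.2 <= 2 ^ (l - absz v.1))%N.

Definition Hedge (l : nat) (x y : vertex) : bool :=
  let h := x.1 in let j := x.2 in let h' := y.1 in let j' := y.2 in
  [||
      [&& 1 <= h <= l%:Z, (1 <= j <= 2 ^ (l - absz h))%N, h' == h - 1
        & (j' == (2 * j).-1)%N || (j' == 2 * j)%N],
      [&& - (l%:Z) <= h <= -1, (1 <= j <= 2 ^ (l - absz h))%N, h' == h + 1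
        & (j' == (2 * j).-1)%N || (j' == 2 * j)%N],
      [&& h == l%:Z, j == 1%N, h' == - (l%:Z) & j' == 1%N]
    | (* (4): x = v_{0,2k-1}, y = v_{0,2k} with k = j'/2 *)
      [&& h == 0, h' == 0, ~~ odd j', (1 <= j'./2 <= 2 ^ l.-1)%N
        & (j == j'.-1)%N] ].

Definition Hadj (l : nat) : rel vertex := fun x y => Hedge l x y || Hedge l y x.

Definition is_path_H (l : nat) (p : seq vertex) : bool :=
  [&& all (isV l) p, uniq p &
      match p with [::] => true | x :: p' => path (Hadj l) x p' end].

From mathcomp Require Import all_boot all_algebra zify.

(* Let S(h,K) be the set of vertices below v_{h,K+1} in the upper tree or above
   v_{-h,K+1} in the lower tree (the two halves share their leaves). For h >= 1
   the only edges leaving S(h,K) join v_{h,K+1} and v_{-h,K+1} to their parents,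
   so a path that meets S(h,K) but has both endpoints outside it uses both of
   these edges. Hence, unless an endpoint lies in S(h+1,K), a path cannot meet
   both S(h,2K) and S(h,2K+1): otherwise v_{h+1,K+1} would have three neighbours
   on it. So the number T_h of sets S(h,K) met by a path satisfies
   T_h <= T_{h+1} + 2, i.e. T_{l-d} <= 2d+1. Distinct vertices at height h or -h
   lie in distinct sets S(h,K) and each S(1,K) holds two leaves, so a path has at
   most 2 T_1 + 2 (T_1 + ... + T_l) <= 2l^2 + 4l - 2 vertices. *)

Set Implicit Arguments.
Unset Strict Implicit.
Unset Printing Implicit Defensive.

Import GRing.Theory.

Lemma count_le_add (T : Type) (a b c : pred T) (s : seq T) :
  (forall x, a x -> b x || c x) -> count a s <= count b s + count c s.
Proof.
move=> sub_abc; rewrite -count_predUI.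
exact: leq_trans (sub_count sub_abc s) (leq_addr _ _).
Qed.

Section SeqNeighbours.
Variable T : eqType.
Implicit Types (s : seq T) (u v w : T) (A : pred T).

(* For duplicate-free [s] this says that [v] comes right after [u] in [s]. *)
Definition consecutive s u v := [&& u \in s, v \in s & index v s == (index u s).+1].

Definition adjacent_in s u v := consecutive s u v || consecutive s v u.

Lemma consecutive_nth x0 s i : uniq s -> i.+1 < size s ->
  consecutive s (nth x0 s i) (nth x0 s i.+1).
Proof.
move=> Us lt_i; have lt_i' := ltnW lt_i.
by rewrite /consecutive !mem_nth // !index_uniq /=.
Qed.

Lemma sorted_consecutive (e : rel T) s u v : sorted e s -> consecutive s u v -> e u v.
Proof.
case: s => [|x p] //= /(pathP u) e_p /and3P[s_u s_v /eqP idx_v].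
have lt_u : index u (x :: p) < size p by rewrite -ltnS -idx_v index_mem.
have := e_p _ lt_u; rewrite nth_index //.
by rewrite -[nth u p _]/(nth u (x :: p) (index u (x :: p)).+1) -idx_v nth_index.
Qed.

Lemma consecutive_asym s u v : consecutive s u v -> ~~ consecutive s v u.
Proof. by case/and3P=> _ _ /eqP idx_v; apply/negP => /and3P[_ _ /eqP]; lia. Qed.

Lemma adjacent_inC s u v : adjacent_in s u v = adjacent_in s v u.
Proof. by rewrite /adjacent_in orbC. Qed.

Lemma adjacent_in_index s u w : adjacent_in s u w ->
  w \in s /\ (index w s = (index u s).+1 \/ index u s = (index w s).+1).
Proof. by case/orP=> /and3P[? ? /eqP ?]; split; auto. Qed.

Lemma adjacent_in_three s u w1 w2 w3 :
  adjacent_in s u w1 -> adjacent_in s u w2 -> adjacent_in s u w3 ->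
  ~~ uniq [:: w1; w2; w3].
Proof.
move=> /adjacent_in_index[s_w1 i1] /adjacent_in_index[s_w2 i2].
move=> /adjacent_in_index[s_w3 i3]; have idx_inj := @index_inj _ u s.
have [e12|[e13|e23]] : index w1 s = index w2 s \/ index w1 s = index w3 s
                       \/ index w2 s = index w3 s by lia.
- by rewrite (idx_inj _ _ s_w1 s_w2 e12) /= mem_head.
- by rewrite (idx_inj _ _ s_w1 s_w3 e13) /= !inE eqxx orbT.
- by rewrite (idx_inj _ _ s_w2 s_w3 e23) /= !inE eqxx andbF.
Qed.

Lemma consecutive_exit A x0 s i j : uniq s -> i <= j < size s ->
  A (nth x0 s i) -> ~~ A (nth x0 s j) ->
  exists u v, [/\ consecutive s u v, A u & ~~ A v].
Proof.
move=> Us /andP[]; elim: j => [|j IH] le_ij lt_j Ai Aj.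
  by move: le_ij Ai; rewrite leqn0 => /eqP->; rewrite (negbTE Aj).
have [le_ij'|lt_ji] := leqP i j; last first.
  have i_eq : i = j.+1 by lia.
  by rewrite i_eq (negbTE Aj) in Ai.
have [Aj'|nAj'] := boolP (A (nth x0 s j)); last exact: IH le_ij' (ltnW lt_j) Ai nAj'.
by exists (nth x0 s j), (nth x0 s j.+1); rewrite consecutive_nth.
Qed.

Lemma uniq_path_crosses_gates (e : rel T) A x0 s g1 g2 :
  symmetric e -> sorted e s -> uniq s ->
  {in s &, forall u v, e u v -> A u -> ~~ A v -> (u, v) = g1 \/ (u, v) = g2} ->
  ~~ A (head x0 s) -> ~~ A (last x0 s) -> has A s ->
  adjacent_in s g1.1 g1.2 /\ adjacent_in s g2.1 g2.2.
Proof.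
move=> e_sym e_s Us gates A_head A_last /(has_nthP x0)[k lt_k Ak].
have [u [v [uv Au Av]]] : exists u v, [/\ consecutive s u v, A u & ~~ A v].
  by apply: (consecutive_exit (j := (size s).-1)) Ak _; rewrite ?nth_last //; lia.
have [v' [u' [v'u' /= Av' /negPn Au']]] :
    exists v' u', [/\ consecutive s v' u', predC A v' & ~~ predC A u'].
  by apply: (consecutive_exit (x0 := x0) (i := 0) (j := k)); rewrite /= ?nth0 ?negbK ?lt_k.
have [s_u s_v] : u \in s /\ v \in s by case/and3P: uv.
have [s_u' s_v'] : u' \in s /\ v' \in s by case/and3P: v'u'.
have e_u'v' : e u' v' by rewrite e_sym; apply: sorted_consecutive v'u'.
have distinct : (u, v) != (u', v').
  by apply: contraNneq (consecutive_asym uv) => -[-> ->].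
have adj_uv : adjacent_in s u v by rewrite /adjacent_in uv.
have adj_u'v' : adjacent_in s u' v' by rewrite /adjacent_in v'u' orbT.
(* Leaving and entering [A] are two different steps of [s], hence go through
   different gates. *)
have [g_uv|g_uv] := gates u v s_u s_v (sorted_consecutive e_s uv) Au Av;
have [g_u'v'|g_u'v'] := gates u' v' s_u' s_v' e_u'v' Au' Av';
  rewrite -?g_uv -?g_u'v'; first [by split | by rewrite g_uv g_u'v' eqxx in distinct].
Qed.

End SeqNeighbours.

Lemma count_le_count_inj (T U : eqType) (a : pred T) (b : pred U) (f : T -> U) s t :
  uniq s -> {in filter a s &, injective f} -> {in filter a s, forall v, f v \in filter b t} ->
  count a s <= count b t.
Proof.
move=> Us f_inj f_in; rewrite -!size_filter -(size_map f).
apply: uniq_leq_size => [|_ /mapP[v v_in ->]]; last exact: f_in.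
by rewrite map_inj_in_uniq ?filter_uniq.
Qed.

Lemma count_iota_double (P : pred nat) n :
  count P (iota 0 n.*2) =
    count (fun K => P K.*2) (iota 0 n) + count (fun K => P K.*2.+1) (iota 0 n).
Proof.
elim: n => [|n IHn] //.
by rewrite doubleS -[n.*2.+2]addn2 -[n.+1]addn1 !iotaD !count_cat IHn /= !add0n; lia.
Qed.

(* [ancestor h v] is the 0-based index of the ancestor of [v] at height [h] in the
   tree containing [v], and [in_subtree h K] is the set S(h,K) of the header. *)
Definition ancestor (h : nat) (v : vertex) : nat := v.2.-1 %/ 2 ^ (h - `|v.1|).

Definition in_subtree (h K : nat) (v : vertex) : bool :=
  (`|v.1| <= h) && (ancestor h v == K).

Definition is_child (y x : vertex) : bool :=
  [&& ((y.1 == x.1 - 1) && (0 <= y.1))%R || ((y.1 == x.1 + 1) && (y.1 <= 0))%R,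
      0 < y.2 & y.2.+1./2 == x.2].

Definition sibling_leaves (u v : vertex) : bool :=
  [&& u.1 == 0%R, v.1 == 0%R & u.2.-1./2 == v.2.-1./2].

(* The root edge v_{l,1} v_{-l,1} joins two mirror images. *)
Definition mirror (u v : vertex) : bool := (v.1 == - u.1)%R && (v.2 == u.2).

Lemma Hedge_cases l x y : Hedge l x y ->
  [\/ is_child y x, sibling_leaves x y | mirror x y].
Proof.
case: x y => [a i] [b j]; rewrite /Hedge /is_child /sibling_leaves /mirror /=.
by case/or4P => uv; [apply: Or31 | apply: Or31 | apply: Or33 | apply: Or32]; lia.
Qed.

Lemma Hadj_sym l : symmetric (Hadj l).
Proof. by move=> u v; rewrite /Hadj orbC. Qed.

Lemma Hadj_cases l u v : Hadj l u v ->
  [\/ is_child u v, is_child v u, sibling_leaves u v | mirror u v].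
Proof.
case: u v => [a i] [b j]; case/orP=> /Hedge_cases[];
  rewrite /is_child /sibling_leaves /mirror /= => uv;
  [apply: Or42 | apply: Or43 | apply: Or44 | apply: Or41 | apply: Or43 | apply: Or44]; lia.
Qed.

Lemma ancestor_child h y x : is_child y x -> `|x.1| <= h -> ancestor h y = ancestor h x.
Proof.
rewrite /is_child /ancestor => yx le_xh.
have -> : h - `|y.1| = (h - `|x.1|).+1 by lia.
by rewrite expnS divnMA; congr (_ %/ _); lia.
Qed.

Lemma ancestor_sibling h u v : 0 < h -> sibling_leaves u v -> ancestor h u = ancestor h v.
Proof.
move=> h_gt0 /and3P[/eqP u0 /eqP v0 /eqP uv]; rewrite /ancestor u0 v0 /= subn0.
by rewrite -(prednK h_gt0) expnS !divnMA !divn2 uv.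
Qed.

Lemma in_subtree_mirror h K u v : mirror u v -> in_subtree h K v = in_subtree h K u.
Proof. by case/andP=> /eqP e1 /eqP e2; rewrite /in_subtree /ancestor e1 e2 abszN. Qed.

Lemma in_subtree_parent h K v : in_subtree h K v -> in_subtree h.+1 K./2 v.
Proof.
case/andP=> le_vh /eqP <-; rewrite /in_subtree /ancestor leqW //= subSn //.
by rewrite expnS mulnC divnMA divn2.
Qed.

(* The edge from v_{eh,K+1} to its parent, for e = 1 or e = -1. *)
Definition gate (h K : nat) (e : int) : vertex * vertex :=
  (((e * h%:Z)%R, K.+1), ((e * h.+1%:Z)%R, K./2.+1)).

Lemma subtree_boundary l h K u v : 0 < h -> Hadj l u v ->
  in_subtree h K u -> ~~ in_subtree h K v -> (u, v) = gate h K 1 \/ (u, v) = gate h K (-1).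
Proof.
move=> h_gt0 /Hadj_cases uv u_in v_out; case/andP: (u_in) => le_uh /eqP anc_u.
case: uv => [uv|vu|uv|uv]; last 3 first.
- case/negP: v_out; rewrite /in_subtree (ancestor_child vu le_uh) anc_u eqxx andbT.
  by rewrite /is_child in vu; lia.
- case/negP: v_out; rewrite /in_subtree -(ancestor_sibling h_gt0 uv) anc_u eqxx andbT.
  by rewrite /sibling_leaves in uv; lia.
- by rewrite (in_subtree_mirror _ _ uv) u_in in v_out.
have le_vh : ~~ (`|v.1| <= h).
  apply: contra v_out => le_vh.
  by rewrite /in_subtree le_vh -(ancestor_child uv le_vh) anc_u eqxx.
move: u v uv anc_u le_uh le_vh {u_in v_out} => [a i] [b j].
rewrite /is_child /ancestor /gate /= => uv anc_u le_ah le_bh.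
have e_ah : `|a| = h by lia.
rewrite e_ah subnn expn0 divn1 in anc_u.
by case/and3P: (uv) => /orP[] sgn _ _; [left | right]; apply/eqP; rewrite !xpair_eqE; lia.
Qed.

Definition subtrees_met (l : nat) (s : seq vertex) (h : nat) : nat :=
  count (fun K => has (in_subtree h K) s) (iota 0 (2 ^ (l - h))).

Lemma count_in_subtree_le1 h v (t : seq nat) : uniq t -> count (in_subtree h ^~ v) t <= 1.
Proof.
move=> Ut; apply: leq_trans (sub_count (a2 := pred1 (ancestor h v)) _ t) _.
  by move=> K /andP[_ /eqP->] /=.
by rewrite count_uniq_mem ?leq_b1.
Qed.

Lemma ancestor_lt l h v : isV l v -> `|v.1| <= h <= l -> ancestor h v < 2 ^ (l - h).
Proof.
case: v => a j; rewrite /isV /ancestor /= => /andP[_ /andP[j_gt0 j_le]] /andP[le_ah le_hl].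
rewrite ltn_divLR ?expn_gt0 // -expnD (_ : l - h + (h - `|a|) = l - `|a|); lia.
Qed.

Section PathInH.
Variables (l : nat) (x : vertex) (p : seq vertex).
Local Notation s := (x :: p).
Hypotheses (Vs : all (isV l) s) (Us : uniq s) (Ps : path (Hadj l) x p).

Lemma path_crosses_top_gate h K : 0 < h ->
  ~~ in_subtree h K x -> ~~ in_subtree h K (last x p) -> has (in_subtree h K) s ->
  adjacent_in s (Posz h, K.+1) (Posz h.+1, K./2.+1).
Proof.
move=> h_gt0 out_x out_last met.
have [top _] := uniq_path_crosses_gates (x0 := x) (@Hadj_sym l) (Ps : sorted _ s) Us
  (fun u v _ _ uv => subtree_boundary h_gt0 uv) out_x out_last met.
by rewrite /gate /= !mul1r in top.
Qed.

Lemma met_children_endpoint h K : 0 < h ->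
  has (in_subtree h K.*2) s -> has (in_subtree h K.*2.+1) s ->
  in_subtree h.+1 K x || in_subtree h.+1 K (last x p).
Proof.
move=> h_gt0 met0 met1; apply/norP => -[out_x out_last].
have out_child K' v : K'./2 = K -> ~~ in_subtree h.+1 K v -> ~~ in_subtree h K' v.
  by move=> <-; apply: contra; apply: in_subtree_parent.
have met : has (in_subtree h.+1 K) s.
  by apply: sub_has met0 => v /in_subtree_parent; rewrite doubleK.
have adj_up := path_crosses_top_gate (ltn0Sn h) out_x out_last met.
have adj_left := path_crosses_top_gate h_gt0 (out_child K.*2 _ (doubleK K) out_x)
  (out_child K.*2 _ (doubleK K) out_last) met0.
have adj_right := path_crosses_top_gate h_gt0 (out_child K.*2.+1 _ (uphalf_double K) out_x)
  (out_child K.*2.+1 _ (uphalf_double K) out_last) met1.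
rewrite doubleK adjacent_inC in adj_left.
rewrite /= uphalf_double adjacent_inC in adj_right.
have := adjacent_in_three adj_up adj_left adj_right.
by rewrite /= !inE !xpair_eqE !eqz_nat eqxx (gtn_eqF (ltnW (ltnSn h.+1))) (ltn_eqF (ltnSn _)).
Qed.

Lemma subtrees_met_succ h : 0 < h < l ->
  subtrees_met l s h <= subtrees_met l s h.+1 + 2.
Proof.
case/andP=> h_gt0 lt_hl; rewrite /subtrees_met.
have -> : 2 ^ (l - h) = (2 ^ (l - h.+1)).*2 by rewrite -mul2n -expnS subnSK.
rewrite count_iota_double -count_predUI leq_add //.
  apply: sub_count => K /orP[] met; apply: sub_has met => v /in_subtree_parent /=;
    by rewrite ?doubleK ?uphalf_double.
apply: leq_trans (count_le_add (b := in_subtree h.+1 ^~ x)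
  (c := in_subtree h.+1 ^~ (last x p)) _ _) _.
  by move=> K /andP[]; apply: met_children_endpoint.
by rewrite -[2]/(1 + 1) leq_add ?count_in_subtree_le1 ?iota_uniq.
Qed.

Lemma subtrees_met_le d : d < l -> subtrees_met l s (l - d) <= d.*2.+1.
Proof.
elim: d => [|d IH] lt_dl.
  by rewrite subn0 /subtrees_met subnn (leq_trans (count_size _ _)).
have h_range : 0 < l - d.+1 < l by lia.
have := subtrees_met_succ h_range; rewrite subnSK ?(ltnW lt_dl) // => step.
have := IH (ltnW lt_dl); lia.
Qed.

Lemma count_le_subtrees_met h (P : pred vertex) : h <= l ->
  {in s, forall v, P v -> `|v.1| <= h} -> {in filter P s &, injective (ancestor h)} ->
  count P s <= subtrees_met l s h.
Proof.
move=> le_hl low inj; apply: count_le_count_inj Us inj _ => v.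
rewrite mem_filter => /andP[Pv s_v]; have le_vh := low v s_v Pv.
rewrite mem_filter mem_iota add0n ancestor_lt ?(allP Vs) ?le_vh // leq0n !andbT.
by apply/hasP; exists v; rewrite // /in_subtree le_vh eqxx.
Qed.

Lemma count_level_le (a : int) : `|a| <= l ->
  count (fun v => v.1 == a) s <= subtrees_met l s `|a|.
Proof.
move=> le_al; apply: count_le_subtrees_met => // [v _ /eqP-> // | [a1 i] [a2 j]].
rewrite !mem_filter /= => /andP[/eqP-> /(allP Vs) Vi] /andP[/eqP-> /(allP Vs) Vj].
rewrite /ancestor /= subnn expn0 !divn1 => eq_ij; congr pair.
by rewrite /isV /= in Vi Vj; lia.
Qed.

Lemma count_abs_level_le h : h <= l ->
  count (fun v => `|v.1| == h) s <= (subtrees_met l s h).*2.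
Proof.
move=> le_hl; rewrite -addnn.
apply: leq_trans (count_le_add (b := fun v => v.1 == Posz h)
  (c := fun v => v.1 == (- Posz h)%R) _ _) _; first by move=> v /=; lia.
have := count_level_le (a := (- Posz h)%R); rewrite abszN => neg.
by rewrite leq_add ?neg ?(count_level_le (a := Posz h)).
Qed.

Lemma count_leaves_le : 0 < l ->
  count (fun v => v.1 == 0%R) s <= (subtrees_met l s 1).*2.
Proof.
move=> l_gt0.
have parity b : count (fun v => (v.1 == 0%R) && (odd v.2 == b)) s <= subtrees_met l s 1.
  apply: count_le_subtrees_met => // [v _ /andP[/eqP-> _] // | [a1 i] [a2 j]].
  rewrite !mem_filter /= => /andP[/andP[/eqP-> /eqP oi] /(allP Vs) Vi].
  move=> /andP[/andP[/eqP-> /eqP oj] /(allP Vs) Vj].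
  rewrite /ancestor /= expn1 => eq_ij; congr pair.
  by rewrite /isV /= in Vi Vj; lia.
rewrite -addnn; apply: leq_trans (leq_add (parity true) (parity false)).
by apply: count_le_add => v ->; case: odd.
Qed.

Lemma count_high_le d : d <= l -> count (fun v => l - d < `|v.1|) s <= 2 * d ^ 2.
Proof.
elim: d => [|d IH] le_dl.
  rewrite subn0 leqn0 eqn0Ngt -has_count; apply/hasPn => v /(allP Vs).
  by rewrite /isV; lia.
apply: leq_trans (count_le_add (b := fun v => `|v.1| == l - d)
  (c := fun v => l - d < `|v.1|) _ _) _; first by move=> v /=; lia.
have := count_abs_level_le (leq_subr d l); have := subtrees_met_le le_dl.
have := IH (ltnW le_dl); lia.
Qed.

Lemma size_path_le : 0 < l -> size s + 2 <= 2 * l ^ 2 + 4 * l.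
Proof.
move=> l_gt0.
have levels : size s <= count (fun v => v.1 == 0%R) s + count (fun v => l - l < `|v.1|) s.
  by rewrite -count_predT; apply: count_le_add => v _ /=; lia.
have met1 : subtrees_met l s (l - l.-1) <= l.-1.*2.+1.
  by apply: subtrees_met_le; rewrite ltn_predL.
rewrite (_ : l - l.-1 = 1) in met1; last by lia.
have := count_leaves_le l_gt0; have := count_high_le (leqnn l); lia.
Qed.

End PathInH.

Theorem theorem4 (l : nat) (p : seq vertex) :
  (1 <= l)%N -> is_path_H l p -> ((size p).-1 <= 2 * l ^ 2 + 4 * l + 7)%N.
Proof.
case: p => [|x p] // l_gt0 /and3P[Vs Us Ps].
have := size_path_le Vs Us Ps l_gt0; rewrite /=; lia.
Qed.
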